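(* Let $k\ge 2$ be an integer. There exists a combinatorial auction (with bids equal to the true valuations) whose winner set $W$ has $|W|=k$ and which has a unique MRC outcome $\pi^{MRC}$, such that $\pi^{MRC}$ gives utility $0$ to exactly $k-2$ winners, while for each of these $k-2$ winners $i$ there exists a core outcome $\pi\in U$ with $\pi_i>0$.
   Context: A combinatorial auction (CA) has a finite set of bidders $N=\{1,\dots,n\}$, a finite set of items $M$, and for each bidder $i$ a valuation $v_i:2^M\to\mathbb{R}_{\ge 0}$ with $v_i(\emptyset)=0$. For $S\subseteq N$ let $w(S)=\max\{\sum_{i\in S}v_i(a_i): a_i\subseteq M,\ a_i\cap a_j=\emptyset\ (i\ne j)\}$ (with $w(\emptyset)=0$). Fix an allocation $(a^*_i)_{i\in N}$ attaining $w(N)$; the winner set is $W=\{i: a^*_i\neq\emptyset\}$. A utility outcome is a vector $\pi\in\mathbb{R}^N$ (bidder $i$ pays $v_i(a^*_i)-\pi_i$). The core is $U=\{\pi\in\mathbb{R}^N:\ \pi_i\ge 0\ \forall i\in N,\ \sum_{i\in N\setminus S}\pi_i\le w(N)-w(S)\ \forall S\subseteq N\}$. An MRC (minimum-revenue-core) outcome is a $\pi\in U$ maximizing $\sum_{i\in N}\pi_i$ over $U$. *)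

From HB Require Import structures.
From mathcomp Require Import all_boot all_order all_algebra.
From mathcomp Require Export reals.
Set Implicit Arguments. Unset Strict Implicit. Unset Printing Implicit Defensive.
Import Order.TTheory GRing.Theory Num.Theory.
Local Open Scope ring_scope.

Section CA.
Variables (R : realFieldType) (n m : nat).
Implicit Types (v : 'I_n -> {set 'I_m} -> R) (a : {ffun 'I_n -> {set 'I_m}})
  (S : {set 'I_n}) (pi : {ffun 'I_n -> R}).

Definition valuation_profile v : Prop :=
  (forall i A, 0 <= v i A) /\ (forall i, v i set0 = 0).

Definition feasible a : bool :=
  [forall i, forall j, (i != j) ==> [disjoint a i & a j]].

(* w(S) = max over feasible allocations of sum_{i in S} v_i(a_i);
   the max with 0 is harmless since the empty allocation is feasible and
   valuations are nonnegative; bidders outside S may be given the empty bundle. *)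
Definition wS v S : R :=
  \big[Num.max/0]_(a | feasible a) \sum_(i in S) v i (a i).

Definition efficient v a : Prop :=
  feasible a /\ \sum_(i : 'I_n) v i (a i) = wS v setT.

Definition winners a : {set 'I_n} := [set i | a i != set0].

Definition in_core v pi : Prop :=
  (forall i, 0 <= pi i) /\
  (forall S : {set 'I_n}, \sum_(i in ~: S) pi i <= wS v setT - wS v S).

Definition MRC v pi : Prop :=
  in_core v pi /\ (forall pi', in_core v pi' -> \sum_i pi' i <= \sum_i pi i).

Definition unique_MRC v pi : Prop :=
  MRC v pi /\ (forall pi', MRC v pi' -> pi' = pi).

End CA.

(* Take k unit-demand winners, winner j valuing item j at 1, and two
   single-minded losers wanting all the winners' items except item 1, resp.
   item 0, at value k - 3/2.  A loser together with the winner whose item he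
   does not want secures k - 1/2 without the other winners, so in every core
   outcome the winners of each loser's bundle get at most 1/2 in total.  Both
   bundles contain all winners except 0 and 1, so the total core utility is at
   most 1, attained only by paying 1/2 to winners 0 and 1 and nothing to the
   other k - 2 winners.  Conversely, utility 1/2 for each winner of a set F
   meeting each loser bundle at most once is supported by Walrasian prices
   (1/2 on the items of F, 1 on the other winners' items), so it lies in the
   core; F a singleton gives any winner positive core utility. *)

From HB Require Import structures.
From mathcomp Require Import all_boot all_order all_algebra.
From mathcomp Require Import reals.
From mathcomp Require Import lra zify.
Set Implicit Arguments.
Unset Strict Implicit.
Unset Printing Implicit Defensive.
Import Order.TTheory GRing.Theory Num.Theory.
Local Open Scope ring_scope.

Lemma sum_le_sum_subset (R : numDomainType) (T : finType) (A B : {set T})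
    (f : T -> R) :
  (forall x, 0 <= f x) -> A \subset B -> \sum_(x in A) f x <= \sum_(x in B) f x.
Proof.
move=> f_ge0 sAB; rewrite [leRHS](big_setID A) /= (setIidPr sAB) lerDl.
exact: sumr_ge0.
Qed.

Lemma sum_indicator (R : numDomainType) (T : finType) (A E : {set T}) (c : R) :
  \sum_(x in A) (if x \in E then c else 0) = c *+ #|A :&: E|.
Proof.
by rewrite -big_mkcondr /= -sumr_const; apply: eq_bigl => x; rewrite !inE.
Qed.

Section DualBounds.
Variables (R : realFieldType) (n m : nat) (v : 'I_n -> {set 'I_m} -> R).
Implicit Types (a : {ffun 'I_n -> {set 'I_m}}) (S : {set 'I_n})
  (pi : {ffun 'I_n -> R}).

Lemma le_wS a S : feasible a -> \sum_(i in S) v i (a i) <= wS v S.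
Proof. by move=> fa; apply: (le_bigmax_cond _ _ fa). Qed.

Lemma sum_bundles_le a (p : 'I_m -> R) : feasible a -> (forall x, 0 <= p x) ->
  \sum_i \sum_(x in a i) p x <= \sum_x p x.
Proof.
move=> fa p_ge0; rewrite (exchange_big_dep predT) //=.
apply: ler_sum => x _; case: (boolP [exists i, x \in a i]) => [/existsP[i xai]|].
  rewrite (bigD1 i) //= big1 ?addr0 // => j /andP[xaj ji].
  move/forallP/(_ j)/forallP/(_ i): fa; rewrite ji /=.
  by move/disjointFr => /(_ _ xaj); rewrite xai.
by move/existsPn => xa; rewrite big1 // => i xai; have := xa i; rewrite xai.
Qed.

(* Weak duality for the welfare linear program. *)
Lemma wS_le_dual S (p : 'I_m -> R) (u : 'I_n -> R) :
  (forall x, 0 <= p x) -> (forall i, 0 <= u i) ->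
  (forall i X, v i X <= \sum_(x in X) p x + u i) ->
  wS v S <= \sum_x p x + \sum_(i in S) u i.
Proof.
move=> p_ge0 u_ge0 cover; apply: bigmax_le => [|a fa].
  by apply: addr_ge0; apply: sumr_ge0.
apply: (@le_trans _ _ (\sum_(i in S) (\sum_(x in a i) p x + u i))).
  by apply: ler_sum => i _; apply: cover.
rewrite big_split lerD2r /=.
apply: le_trans _ (sum_bundles_le fa p_ge0).
rewrite [leRHS](bigID (mem S)) /= lerDl.
by apply: sumr_ge0 => i _; apply: sumr_ge0.
Qed.

(* Utilities supported by competitive-equilibrium prices lie in the core. *)
Lemma in_core_dual pi (p : 'I_m -> R) :
  (forall x, 0 <= p x) -> (forall i, 0 <= pi i) ->
  (forall i X, v i X <= \sum_(x in X) p x + pi i) ->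
  \sum_x p x + \sum_i pi i = wS v setT -> in_core v pi.
Proof.
move=> p_ge0 pi_ge0 cover total; split=> // S.
have := @wS_le_dual S p pi p_ge0 pi_ge0 cover.
rewrite -total (bigID (mem S) predT) /=.
have -> : \sum_(i | i \notin S) pi i = \sum_(i in ~: S) pi i.
  by apply: eq_bigl => i; rewrite inE.
by move=> h; lra.
Qed.

Lemma core_loser a pi x : valuation_profile v -> efficient v a ->
  x \notin winners a -> in_core v pi -> pi x = 0.
Proof.
move=> [_ v0] [fa eff] xW [pi_ge0 stable]; apply/eqP; rewrite eq_le pi_ge0 andbT.
have := stable [set~ x]; rewrite setCK big_set1.
have : wS v setT <= wS v [set~ x].
  apply: le_trans _ (le_wS _ fa).
  rewrite -eff (bigD1 x) //= (eq_bigl _ _ (fun i => in_setC1 i x)).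
  by move: xW; rewrite inE negbK => /eqP->; rewrite v0 add0r.
by move=> h1 h2; lra.
Qed.

Lemma core_sum_winners a pi : valuation_profile v -> efficient v a ->
  in_core v pi -> \sum_i pi i = \sum_(i in winners a) pi i.
Proof.
move=> vp eff core; rewrite (bigID (mem (winners a))) /=.
by rewrite [X in _ + X]big1 ?addr0 // => i iW; apply: core_loser vp eff iW core.
Qed.

Definition alloc2 (x y : 'I_n) (X Y : {set 'I_m}) : {ffun 'I_n -> {set 'I_m}} :=
  [ffun i => if i == x then X else if i == y then Y else set0].

Lemma feasible_alloc2 (x y : 'I_n) (X Y : {set 'I_m}) :
  x != y -> [disjoint X & Y] -> feasible (alloc2 x y X Y).
Proof.
move=> xy dXY; apply/forallP => i; apply/forallP => j; apply/implyP => ij.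
rewrite !ffunE; have d0 (A : {set 'I_m}) : [disjoint set0 & A].
  by rewrite -setI_eq0 set0I.
have d0' (A : {set 'I_m}) : [disjoint A & set0] by rewrite disjoint_sym.
case: (eqVneq i x) => [ix|_]; case: (eqVneq j x) => [jx|_].
- by rewrite ix jx eqxx in ij.
- by case: ifP.
- by case: ifP => _; rewrite // disjoint_sym.
- case: (eqVneq i y) => [iy|_]; case: (eqVneq j y) => [jy|_] //.
  by rewrite iy jy eqxx in ij.
Qed.

Lemma le_wS_pair (x y : 'I_n) (X Y : {set 'I_m}) :
  x != y -> [disjoint X & Y] -> v x X + v y Y <= wS v [set x; y].
Proof.
move=> xy dXY; apply: le_trans _ (le_wS _ (feasible_alloc2 xy dXY)).
by rewrite big_setU1 ?in_set1 //= big_set1 !ffunE eqxx eq_sym (negbTE xy) eqxx.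
Qed.

End DualBounds.

Section Construction.
Variables (R : realFieldType) (k : nat).
Hypothesis k_ge2 : (2 <= k)%N.

(* Bidders and items are both indexed by ['I_k.+2]: bidder [j < k] is a winner
   wanting only item [j]; bidders [k] and [k.+1] are single-minded losers
   whose bundles are all winners' items except item [1], resp. item [0]. *)
Definition winset : {set 'I_k.+2} := [set j : 'I_k.+2 | (j < k)%N].
Definition w0 : 'I_k.+2 := ord0.
Definition w1 : 'I_k.+2 := @Ordinal k.+2 1 isT.
Definition lA : 'I_k.+2 := @Ordinal k.+2 k (leqnSn k.+1).
Definition lB : 'I_k.+2 := ord_max.

Definition partner (l : 'I_k.+2) : 'I_k.+2 := if l == lA then w1 else w0.
Definition bundle (l : 'I_k.+2) : {set 'I_k.+2} := winset :\ partner l.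
Definition alpha : R := k%:R - 3 / 2.

Definition value (j : 'I_k.+2) (X : {set 'I_k.+2}) : R :=
  if j \in winset then (j \in X)%:R else (bundle j \subset X)%:R * alpha.

Definition alloc : {ffun 'I_k.+2 -> {set 'I_k.+2}} :=
  [ffun j => if j \in winset then [set j] else set0].

Definition util (F : {set 'I_k.+2}) : {ffun 'I_k.+2 -> R} :=
  [ffun j => if j \in F then 1 / 2 else 0].

Definition price (F : {set 'I_k.+2}) (x : 'I_k.+2) : R :=
  (x \in winset)%:R - util F x.

Definition mrc_outcome : {ffun 'I_k.+2 -> R} := util [set w0; w1].
Definition null_winners : {set 'I_k.+2} := winset :\ w0 :\ w1.

Lemma w0_win : w0 \in winset. Proof. by rewrite inE /=; lia. Qed.
Lemma w1_win : w1 \in winset. Proof. by rewrite inE /=; lia. Qed.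
Lemma lA_lose : lA \notin winset. Proof. by rewrite inE /= ltnn. Qed.
Lemma lB_lose : lB \notin winset. Proof. by rewrite inE /=; lia. Qed.
Lemma w0_neq_w1 : w0 != w1. Proof. by rewrite -val_eqE. Qed.
Lemma lA_neq_lB : lA != lB. Proof. by rewrite -val_eqE /=; lia. Qed.

Lemma card_winset : #|winset| = k.
Proof.
have -> : winset = ~: [set lA; lB].
  apply/setP => j; rewrite !inE -!val_eqE /=.
  by case: j => j /= lt_j; apply/idP/idP; lia.
have := cardsC [set lA; lB]; rewrite cards2 lA_neq_lB card_ord.
by move=> /eqP; rewrite -[k.+2]/(2 + k)%N eqn_add2l => /eqP.
Qed.

Lemma partner_win l : partner l \in winset.
Proof. by rewrite /partner; case: ifP => _; [exact: w1_win | exact: w0_win]. Qed.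

Lemma card_bundle l : #|bundle l| = k.-1.
Proof.
have := cardsD1 (partner l) winset; rewrite partner_win card_winset => def_k.
by rewrite [in RHS]def_k.
Qed.

Lemma alpha_ge0 : 0 <= alpha.
Proof.
have : 2%:R <= k%:R :> R by rewrite ler_nat.
by rewrite /alpha; lra.
Qed.

Lemma value_ge0 j X : 0 <= value j X.
Proof. by rewrite /value; case: ifP => _; rewrite ?mulr_ge0 ?alpha_ge0. Qed.

Lemma util_ge0 F j : 0 <= util F j.
Proof. by rewrite ffunE; case: ifP => _; lra. Qed.

Section Prices.
Variable F : {set 'I_k.+2}.
Hypothesis F_win : F \subset winset.
Hypothesis F_bundle : forall l, (#|bundle l :&: F| <= 1)%N.

Lemma price_ge0 x : 0 <= price F x.
Proof.
rewrite /price ffunE; case: (boolP (x \in F)) => [/(subsetP F_win) -> /=|_].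
  by lra.
by rewrite subr0.
Qed.

Lemma sum_price_win (A : {set 'I_k.+2}) : A \subset winset ->
  \sum_(x in A) price F x = #|A|%:R - (1 / 2) *+ #|A :&: F|.
Proof.
move=> A_win; rewrite -sumr_const -(sum_indicator A F) -sumrB.
by apply: eq_bigr => x /(subsetP A_win) xW; rewrite /price xW ffunE.
Qed.

Lemma alpha_le_price_bundle l : alpha <= \sum_(x in bundle l) price F x.
Proof.
rewrite sum_price_win ?subsetDl // card_bundle -mulr_natr /alpha.
have : (#|bundle l :&: F|%:R : R) <= 1 by rewrite (ler_nat R _ 1).
have : (k.-1%:R : R) = k%:R - 1.
  by rewrite -[in RHS](prednK (ltnW k_ge2)) -natr1 addrK.
by move=> -> ?; lra.
Qed.

Lemma value_le_price j (X : {set 'I_k.+2}) :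
  value j X <= \sum_(x in X) price F x + util F j.
Proof.
have util_F_ge0 := util_ge0 F j.
have sum_ge0 : 0 <= \sum_(x in X) price F x.
  by apply: sumr_ge0 => x _; apply: price_ge0.
rewrite /value; case: ifP => jW.
  case: (boolP (j \in X)) => jX /=; last by rewrite addr_ge0.
  have := sum_le_sum_subset price_ge0 (_ : [set j] \subset X).
  rewrite sub1set big_set1 /price jW => /(_ jX) /=; lra.
case: (boolP (bundle j \subset X)) => bX /=; last by rewrite mul0r addr_ge0.
rewrite mul1r; have := sum_le_sum_subset price_ge0 bX.
have := alpha_le_price_bundle j; lra.
Qed.

Lemma sum_price_util : \sum_x price F x + \sum_j util F j = k%:R.
Proof.
have -> : k%:R = \sum_(x in winset) 1 :> R by rewrite sumr_const card_winset.
rewrite -big_split [RHS]big_mkcond /=.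
by apply: eq_bigr => x _; rewrite /price subrK; case: ifP.
Qed.

End Prices.

Lemma value_set0 j : value j set0 = 0.
Proof.
rewrite /value in_set0; case: ifP => // _.
suff /negbTE-> : ~~ (bundle j \subset set0) by rewrite mul0r.
rewrite subset0; apply/set0Pn; rewrite /bundle /partner.
by case: ifP => _; [exists w0 | exists w1];
  rewrite in_setD1 ?w0_win ?w1_win ?andbT // eq_sym w0_neq_w1.
Qed.

Lemma valuation_profile_value : valuation_profile value.
Proof. by split; [exact: value_ge0 | exact: value_set0]. Qed.

Lemma feasible_alloc : feasible alloc.
Proof.
apply/forallP => i; apply/forallP => j; apply/implyP => ij; rewrite !ffunE.
case: ifP => _; case: ifP => _; rewrite ?disjoints1 ?in_set1 ?in_set0 //.
all: by rewrite -setI_eq0 set0I.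
Qed.

Lemma winners_alloc : winners alloc = winset.
Proof.
apply/setP => j; rewrite in_set ffunE; case: ifP => jW; last by rewrite eqxx.
by apply/set0Pn; exists j; rewrite set11.
Qed.

Lemma sum_value_alloc (S : {set 'I_k.+2}) :
  \sum_(j in S) value j (alloc j) = #|S :&: winset|%:R.
Proof.
rewrite -sum_indicator; apply: eq_bigr => j _.
by rewrite ffunE; case: ifP => jW; rewrite ?value_set0 // /value jW set11.
Qed.

Lemma wS_total : wS value setT = k%:R.
Proof.
apply/eqP; rewrite eq_le; apply/andP; split; last first.
  have := le_wS value setT feasible_alloc.
  by rewrite sum_value_alloc setTI card_winset.
have F_win : set0 \subset winset := sub0set _.
have F_bundle l : (#|bundle l :&: set0| <= 1)%N by rewrite setI0 cards0.
have sum_util0 (P : pred 'I_k.+2) : \sum_(j | P j) util set0 j = 0.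
  by rewrite big1 // => j _; rewrite ffunE in_set0.
have := wS_le_dual setT (price_ge0 F_win) (util_ge0 set0)
  (value_le_price F_win F_bundle).
by rewrite -(sum_price_util set0) !sum_util0 !addr0.
Qed.

Lemma efficient_alloc : efficient value alloc.
Proof.
split; first exact: feasible_alloc.
have := sum_value_alloc setT; rewrite setTI card_winset wS_total => <-.
by apply: eq_bigl => j; rewrite inE.
Qed.

Lemma util_in_core (F : {set 'I_k.+2}) : F \subset winset ->
  (forall l, (#|bundle l :&: F| <= 1)%N) -> in_core value (util F).
Proof.
move=> F_win F_bundle; apply: in_core_dual (price_ge0 F_win) (util_ge0 F) _ _.
  exact: value_le_price.
by rewrite sum_price_util wS_total.
Qed.

Lemma sum_bundle_lA (f : 'I_k.+2 -> R) :
  \sum_(j in bundle lA) f j = f w0 + \sum_(j in null_winners) f j.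
Proof.
rewrite /bundle /partner eqxx (big_setD1 w0) ?in_setD1 ?w0_neq_w1 ?w0_win //.
by rewrite /null_winners !setDDl setUC.
Qed.

Lemma sum_bundle_lB (f : 'I_k.+2 -> R) :
  \sum_(j in bundle lB) f j = f w1 + \sum_(j in null_winners) f j.
Proof.
rewrite /bundle /partner eq_sym (negbTE lA_neq_lB).
by rewrite (big_setD1 w1) // in_setD1 eq_sym w0_neq_w1 w1_win.
Qed.

Lemma sum_winset (f : 'I_k.+2 -> R) :
  \sum_(j in winset) f j = f w0 + f w1 + \sum_(j in null_winners) f j.
Proof.
have w1_in : w1 \in winset :\ w0 by rewrite in_setD1 eq_sym w0_neq_w1 w1_win.
by rewrite (big_setD1 w0 w0_win) (big_setD1 w1 w1_in) /= addrA.
Qed.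

Section CoreBounds.
Variable p : {ffun 'I_k.+2 -> R}.
Hypothesis p_core : in_core value p.

(* Loser [l] and his partner can reach [alpha + 1 = k - 1/2] without the
   bidders of [bundle l]. *)
Lemma core_sum_bundle l : l \notin winset ->
  \sum_(j in bundle l) p j <= 1 / 2.
Proof.
move=> lL; have [p_ge0 stable] := p_core.
have l_partner : l != partner l.
  by apply: contraNneq lL => ->; exact: partner_win.
have disj : [disjoint bundle l & [set partner l]].
  by rewrite disjoint_sym disjoints1 /bundle in_setD1 eqxx.
have := le_wS_pair value l_partner disj.
have -> : value l (bundle l) = alpha by rewrite /value (negbTE lL) subxx mul1r.
have -> : value (partner l) [set partner l] = 1.
  by rewrite /value partner_win set11.
have := stable [set l; partner l]; rewrite wS_total.
have : \sum_(j in bundle l) p j <= \sum_(j in ~: [set l; partner l]) p j.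
  apply: sum_le_sum_subset => //; apply/subsetP => j.
  rewrite /bundle in_setD1 in_setC in_set2 => /andP[jp jW].
  by rewrite (negbTE jp) orbF; apply: contraTneq jW => ->.
rewrite /alpha; lra.
Qed.

Lemma core_sum_split :
  [/\ \sum_j p j = p w0 + p w1 + \sum_(j in null_winners) p j,
      p w0 + \sum_(j in null_winners) p j <= 1 / 2,
      p w1 + \sum_(j in null_winners) p j <= 1 / 2
    & 0 <= \sum_(j in null_winners) p j].
Proof.
have [p_ge0 _] := p_core.
rewrite (core_sum_winners valuation_profile_value efficient_alloc p_core).
rewrite winners_alloc sum_winset -sum_bundle_lA -sum_bundle_lB.
by split; [| exact: core_sum_bundle lA_lose | exact: core_sum_bundle lB_lose
           | exact: sumr_ge0].
Qed.

Lemma core_sum_le1 : \sum_j p j <= 1.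
Proof.
have [p_ge0 _] := p_core; have [-> ? ? ?] := core_sum_split.
by have := p_ge0 w0; have := p_ge0 w1; lra.
Qed.

Lemma core_sum_eq1 : \sum_j p j = 1 -> p = mrc_outcome.
Proof.
have [p_ge0 _] := p_core; have [-> ? ? ?] := core_sum_split => sum1.
have := p_ge0 w0; have := p_ge0 w1 => ? ?.
have sum_null0 : \sum_(j in null_winners) p j = 0 by lra.
apply/ffunP => j; rewrite ffunE in_set2.
case: (eqVneq j w0) => [->|j_w0] /=; first by lra.
case: (eqVneq j w1) => [->|j_w1] /=; first by lra.
case: (boolP (j \in winset)) => jW.
  apply: (psumr_eq0P (fun i _ => p_ge0 i) sum_null0).
  by rewrite !in_setD1 j_w0 j_w1.
apply: core_loser valuation_profile_value efficient_alloc _ p_core.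
by rewrite winners_alloc.
Qed.

End CoreBounds.

Lemma card_bundle_pair l : (#|bundle l :&: [set w0; w1]| <= 1)%N.
Proof.
have partner_pair : partner l \in [set w0; w1].
  by rewrite /partner in_set2; case: ifP; rewrite eqxx ?orbT.
apply: leq_trans (subset_leq_card (_ : _ \subset [set w0; w1] :\ partner l)) _.
  by apply/subsetP => x; rewrite in_setI !in_setD1 => /andP[/andP[-> _] ->].
have := cardsD1 (partner l) [set w0; w1].
by rewrite cards2 w0_neq_w1 partner_pair /=; lia.
Qed.

Lemma mrc_outcome_in_core : in_core value mrc_outcome.
Proof.
apply: util_in_core; last exact: card_bundle_pair.
apply/subsetP => x; rewrite in_set2 => /orP[]/eqP->;
  [exact: w0_win | exact: w1_win].
Qed.

Lemma sum_mrc_outcome : \sum_j mrc_outcome j = 1.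
Proof.
under eq_bigr do rewrite ffunE.
by rewrite -big_mkcond sumr_const cards2 w0_neq_w1 /= mulr2n; lra.
Qed.

Lemma unique_MRC_mrc_outcome : unique_MRC value mrc_outcome.
Proof.
have MRC_mrc_outcome : MRC value mrc_outcome.
  split=> [|p p_core]; first exact: mrc_outcome_in_core.
  by rewrite sum_mrc_outcome core_sum_le1.
split=> // p [p_core p_max]; apply: core_sum_eq1 => //.
have := p_max _ mrc_outcome_in_core; have := core_sum_le1 p_core.
by rewrite sum_mrc_outcome; lra.
Qed.

Lemma mrc_null_winners :
  [set i in winners alloc | mrc_outcome i == 0] = null_winners.
Proof.
have half_neq0 : (1 / 2 : R) == 0 = false by apply: gt_eqF; lra.
apply/setP => j; rewrite winners_alloc !inE ffunE in_set2.
case: (eqVneq j w0) => [->|j_w0]; first by rewrite half_neq0 andbF.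
case: (eqVneq j w1) => [->|j_w1]; first by rewrite half_neq0 andbF.
by rewrite eqxx andbT.
Qed.

Lemma card_null_winners : #|null_winners| = (k - 2)%N.
Proof.
have := cardsD1 w0 winset; have := cardsD1 w1 (winset :\ w0).
rewrite w0_win in_setD1 eq_sym w0_neq_w1 w1_win card_winset /=.
by move=> h1 h2; rewrite [in RHS]h2 h1 add1n add1n subSS subSS subn0.
Qed.

End Construction.

Theorem lemma1 (R : realType) (k : nat) (hk : (2 <= k)%N) :
  exists (n m : nat) (v : 'I_n -> {set 'I_m} -> R)
         (a : {ffun 'I_n -> {set 'I_m}}) (piMRC : {ffun 'I_n -> R}),
    valuation_profile v /\
    efficient v a /\
    #|winners a| = k /\
    unique_MRC v piMRC /\
    #|[set i in winners a | piMRC i == 0]| = (k - 2)%N /\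
    (forall i, i \in winners a -> piMRC i = 0 ->
       exists pi : {ffun 'I_n -> R}, in_core v pi /\ 0 < pi i).
Proof.
exists k.+2, k.+2, (@value R k), (alloc k), (mrc_outcome R k).
split; first exact: valuation_profile_value.
split; first exact: efficient_alloc.
split; first by rewrite winners_alloc card_winset.
split; first exact: unique_MRC_mrc_outcome.
split; first by rewrite mrc_null_winners card_null_winners.
move=> i; rewrite winners_alloc => iW _; exists (util R [set i]); split.
  apply: (util_in_core _ hk); first by rewrite sub1set.
  by move=> l; rewrite -(cards1 i) subset_leq_card ?subsetIr.
by rewrite ffunE set11; lra.
Qed.
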